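(* Let $p$ be a prime and let $G \cong \mathbb{Z}_{p^{e_1}}\oplus\mathbb{Z}_{p^{e_2}}\oplus\cdots\oplus\mathbb{Z}_{p^{e_l}}$, where $1\le e_1\le e_2\le\cdots\le e_l$ are integers, so $G$ has exponent $n=p^{e_l}$. Let $A$ be a non-empty subset of $]p^{e_l}[=\{1,2,\dots,p^{e_l}\}$ such that the elements of $A$ are pairwise incongruent modulo $p$ and none of them is divisible by $p$. Then \[ d_A(G)\le \left\lceil \frac{1}{|A|}\Big(1+\sum_{i=1}^{l}(p^{e_i}-1)\Big)\right\rceil . \]
   Context: For an integer $x\ge1$, $]x[=\{1,2,\dots,x\}$. Let $G$ be a finite abelian group (written additively) of exponent $n$ and let $\emptyset\ne A\subseteq\, ]n[$. The constant $d_A(G)$ is the least positive integer $t$ such that for every sequence $g_1,\dots,g_t$ of (not necessarily distinct) elements of $G$ there exist $\ell\ge1$, indices $1\le i_1<\dots<i_\ell\le t$ and elements $a_1,\dots,a_\ell\in A$ (repetitions allowed) with $\sum_{j=1}^{\ell}a_j g_{i_j}=0$ in $G$. $\lceil x\rceil$ denotes the smallest integer $\ge x$. *)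

From mathcomp Require Import all_boot.
Set Implicit Arguments. Unset Strict Implicit. Unset Printing Implicit Defensive.

(* G = Z_{p^{e 0}} (+) ... (+) Z_{p^{e (l-1)}}, elements are dependent tuples
   of residues. *)
Definition Gelt (p l : nat) (e : nat -> nat) : Type :=
  forall i : 'I_l, 'I_(p ^ e i).

Definition A_weighted_zero_subsum (p l : nat) (e : nat -> nat) (A : seq nat)
  (t : nat) (g : 'I_t -> Gelt p l e) : Prop :=
  exists (S : {set 'I_t}) (a : 'I_t -> nat),
    S != set0 /\ (forall j, j \in S -> a j \in A) /\
    forall i : 'I_l, (\sum_(j in S) a j * g j i) %% p ^ e i = 0.

Definition dA_property (p l : nat) (e : nat -> nat) (A : seq nat) (t : nat) : Prop :=
  forall g : 'I_t -> Gelt p l e, A_weighted_zero_subsum A g.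

Definition is_dA (p l : nat) (e : nat -> nat) (A : seq nat) (d : nat) : Prop :=
  0 < d /\ dA_property p l e A d /\
  forall t, 0 < t -> dA_property p l e A t -> d <= t.

Definition ceil_div (m k : nat) : nat := (m + k.-1) %/ k.

From HB Require Import structures.
From mathcomp Require Import all_boot all_algebra zify.
From Stdlib Require Import Classical Wf_nat.
Import GRing.Theory.
Set Implicit Arguments. Unset Strict Implicit. Unset Printing Implicit Defensive.
Local Open Scope ring_scope.

(* Realise G as H / kerG with H = (Z/QZ)^l, and work in the group algebra
   F_p[H] with the functional [sum_on kerG] summing coefficients over kerG.
   It kills f * (delta h - 1) for h in kerG, hence the ideal generated by the
   (delta u_i - 1)^(p^e_i), hence every product of more than
   \sum_i (p^e_i - 1) elements of the augmentation ideal.  As A is injective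
   modulo p, there are weights c with c_0 = -1 in F_p such that
   c_0 + \sum_(a in A) c_a y^a is divisible by (y - 1)^|A|.  For g_1 .. g_t
   with t |A| > \sum_i (p^e_i - 1), the functional therefore vanishes on
   \prod_j (c_0 + \sum_a c_a (delta g_j)^a); expanding the product, the
   constant choice contributes (-1)^t and every other term is nonzero only if
   its A-weighted subsum of the g_j lies in kerG, i.e. vanishes in G. *)

Section GeneratedIdeal.
Variables (R : comNzRingType) (l : nat) (z : 'I_l -> R).

Definition gen_ideal (v : R) : Prop := exists r : 'I_l -> R, v = \sum_i r i * z i.

Lemma gen_ideal_gen i : gen_ideal (z i).
Proof.
exists (fun j => (j == i)%:R); rewrite (bigD1 i) //= eqxx mul1r big1 ?addr0 //.
by move=> j /negbTE ->; rewrite mul0r.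
Qed.

Lemma gen_idealMr v w : gen_ideal v -> gen_ideal (v * w).
Proof.
move=> [r ->]; exists (fun i => r i * w); rewrite mulr_suml.
by apply: eq_bigr => i _; rewrite mulrAC.
Qed.

Lemma gen_idealD v w : gen_ideal v -> gen_ideal w -> gen_ideal (v + w).
Proof.
move=> [r ->] [s ->]; exists (fun i => r i + s i); rewrite -big_split.
by apply: eq_bigr => i _; rewrite mulrDl.
Qed.

Lemma gen_ideal_sub1M u w :
  gen_ideal (u - 1) -> gen_ideal (w - 1) -> gen_ideal (u * w - 1).
Proof.
move=> Ju Jw; have -> : u * w - 1 = (u - 1) * w + (w - 1).
  by rewrite mulrBl mul1r addrA subrK.
by apply: gen_idealD => //; apply: gen_idealMr.
Qed.

Lemma gen_ideal_sub1X u n : gen_ideal (u - 1) -> gen_ideal (u ^+ n - 1).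
Proof. by move=> Ju; rewrite subrX1; apply: gen_idealMr. Qed.

Lemma mulr_monomial (m : 'I_l -> nat) i :
  z i * \prod_j z j ^+ m j = \prod_j z j ^+ (m j + (j == i)).
Proof.
under [RHS]eq_bigr do rewrite exprD.
rewrite big_split /= [X in _ = _ * X](bigD1 i) //= eqxx expr1.
rewrite [X in _ = _ * (_ * X)]big1 => [|j /negbTE ->]; last by rewrite expr0.
by rewrite mulr1 mulrC.
Qed.

Variables (I : R -> Prop) (q : 'I_l -> nat).
Hypothesis I0 : I 0.
Hypothesis ID : forall a b, I a -> I b -> I (a + b).
Hypothesis IM : forall r a, I a -> I (r * a).
Hypothesis Izq : forall i, I (z i ^+ q i).

(* The monomial factor strengthens the induction: each factor of the product
   is traded for one more power of some generator, and a monomial of total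
   degree above [\sum_i (q i - 1)] is divisible by some [z i ^+ q i]. *)
Lemma prod_gen_ideal_monomial (T : Type) (v : T -> R) (s : seq T)
    (m : 'I_l -> nat) :
  (forall x, gen_ideal (v x)) ->
  (1 + \sum_i (q i - 1) <= size s + \sum_i m i)%N ->
  I (\prod_(x <- s) v x * \prod_i z i ^+ m i).
Proof.
move=> Jv; elim: s m => [|x s IHs] m Hsize.
  have [i qm] : exists i, (q i <= m i)%N.
    apply/existsP; apply: contraTT Hsize; rewrite negb_exists => /forallP small.
    have : (\sum_i m i <= \sum_i (q i - 1))%N.
      by apply: leq_sum => i _; move: (small i); rewrite -ltnNge; lia.
    by rewrite /= add0n; lia.
  rewrite big_nil mul1r (bigD1 i) //= -(subnK qm) exprD -mulrA mulrCA mulrC.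
  exact: IM.
rewrite big_cons; have [r ->] := Jv x; rewrite -mulrA big_distrl /=.
apply: (big_ind I) => // i _.
rewrite -mulrA; apply: IM; rewrite mulrCA mulr_monomial; apply: IHs.
have sum_eq1 : (\sum_j ((j == i) : nat) = 1)%N.
  by rewrite (bigD1 i) //= eqxx big1 // => j /negbTE ->.
by rewrite big_split /= sum_eq1; move: Hsize => /=; lia.
Qed.

Lemma prod_gen_ideal (T : finType) (v : T -> R) :
  (forall x, gen_ideal (v x)) ->
  (1 + \sum_i (q i - 1) <= #|T|)%N -> I (\prod_x v x).
Proof.
move=> Jv HT; have := prod_gen_ideal_monomial (s := index_enum T) (m := fun=> 0%N) Jv.
rewrite [X in _ * X]big1 ?mulr1 => [|i _]; last by rewrite expr0.
by apply; rewrite big1_eq addn0 (leq_trans HT) // cardT enumT /index_enum unlock.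
Qed.

End GeneratedIdeal.

Section GroupRing.
Variables (H : finZmodType) (F : comNzRingType).

Definition gring := {ffun H -> F}.
HB.instance Definition _ := GRing.Zmodule.on gring.

Definition gmul (f g : gring) : gring := [ffun x => \sum_y f y * g (x - y)].
Definition gone : gring := [ffun x => (x == 0)%:R].

Lemma gmulC : commutative gmul.
Proof.
move=> f g; apply/ffunP => x; rewrite !ffunE.
rewrite (reindex_inj (inv_inj (subKr x))) /=.
by apply: eq_bigr => y _; rewrite subKr mulrC.
Qed.

Lemma gmulA : associative gmul.
Proof.
move=> f g h; apply/ffunP => x; rewrite !ffunE; symmetry.
under eq_bigr do rewrite ffunE big_distrl.
under [RHS]eq_bigr do rewrite ffunE big_distrr.
rewrite exchange_big /=; apply: eq_bigr => y _.
rewrite (reindex_inj (addIr y)) /=; apply: eq_bigr => u _.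
by rewrite addrK mulrA opprD addrA [x - u - y]addrAC.
Qed.

Lemma gmul1 : left_id gone gmul.
Proof.
move=> f; apply/ffunP => x; rewrite !ffunE (bigD1 0) //= ffunE eqxx mul1r subr0.
by rewrite big1 ?addr0 // => y /negbTE y0; rewrite ffunE y0 mul0r.
Qed.

Lemma gmulDl : left_distributive gmul +%R.
Proof.
move=> f g h; apply/ffunP => x; rewrite !ffunE -big_split /=.
by apply: eq_bigr => y _; rewrite ffunE mulrDl.
Qed.

Lemma gone_neq0 : gone != 0.
Proof. by apply/eqP => /ffunP /(_ 0); rewrite !ffunE eqxx; apply/eqP; exact: oner_neq0. Qed.

HB.instance Definition _ :=
  GRing.Zmodule_isComNzRing.Build gring gmulA gmulC gmul1 gmulDl gone_neq0.

Definition delta (h : H) : gring := [ffun x => (x == h)%:R].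

Lemma gringME (f g : gring) x : (f * g) x = \sum_y f y * g (x - y).
Proof. by rewrite /GRing.mul /= ffunE. Qed.

Lemma delta0 : delta 0 = 1.
Proof. by []. Qed.

Lemma deltaD a b : delta (a + b) = delta a * delta b.
Proof.
apply/ffunP => x; rewrite gringME ffunE (bigD1 a) //= !ffunE eqxx mul1r.
rewrite big1 ?addr0 => [|y /negbTE ya]; last by rewrite ffunE ya mul0r.
by rewrite subr_eq addrC.
Qed.

Lemma deltaX a n : delta a ^+ n = delta (a *+ n).
Proof.
elim: n => [|n IHn]; first by rewrite expr0 mulr0n delta0.
by rewrite exprS IHn mulrS deltaD.
Qed.

Lemma mul_deltaE h (g : gring) x : (delta h * g) x = g (x - h).
Proof.
rewrite mulrC gringME (bigD1 (x - h)) //= ffunE subKr eqxx mulr1.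
rewrite big1 ?addr0 // => y yxh; rewrite ffunE.
case: eqP => [xyh|_]; last by rewrite mulr0.
by move: yxh; rewrite -xyh subKr eqxx.
Qed.

Lemma gring_pchar p : p \in [pchar F] -> p \in [pchar gring].
Proof.
move=> pF; apply/andP; split; first by case/andP: pF.
by apply/eqP/ffunP => x; rewrite ffunMnE !ffunE -[_ *+ p]mulr_natr (pcharf0 pF) mulr0.
Qed.

Lemma delta_sub1X_pchar p n h :
  p \in [pchar F] -> (delta h - 1) ^+ (p ^ n) = delta (h *+ p ^ n) - 1.
Proof.
move=> pF; have pnat : [pchar gring].-nat (p ^ n)%N.
  by rewrite pnatX pnatE ?gring_pchar //; case/andP: pF.
by rewrite exprDn_pchar // exprNn_pchar // expr1n deltaX.
Qed.

Lemma delta_sum_gen_ideal l (eps : 'I_l -> H) (n : 'I_l -> nat) :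
  gen_ideal (fun i => delta (eps i) - 1) (delta (\sum_i eps i *+ n i) - 1).
Proof.
rewrite (big_morph delta deltaD delta0).
apply: (big_ind (fun u => gen_ideal _ (u - 1))) => [|u v|i _].
- by rewrite subrr; exists (fun=> 0); rewrite big1 // => i _; rewrite mul0r.
- exact: gen_ideal_sub1M.
- by rewrite -deltaX; apply/gen_ideal_sub1X/gen_ideal_gen.
Qed.

Variable K : {pred H}.
Hypothesis K0 : 0 \in K.
Hypothesis KB : forall a b, a \in K -> b \in K -> a - b \in K.

Definition sum_on (f : gring) : F := \sum_(x in K) f x.

Lemma sum_onD f g : sum_on (f + g) = sum_on f + sum_on g.
Proof. by rewrite /sum_on -big_split; apply: eq_bigr => x _; rewrite ffunE. Qed.

Lemma sum_on0 : sum_on 0 = 0.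
Proof. by rewrite /sum_on big1 // => x _; rewrite ffunE. Qed.

Lemma sum_onB f g : sum_on (f - g) = sum_on f - sum_on g.
Proof. by rewrite /sum_on -sumrB; apply: eq_bigr => x _; rewrite !ffunE. Qed.

Lemma sum_onMn f n : sum_on (f *+ n) = sum_on f *+ n.
Proof. by rewrite /sum_on -sumrMnl; apply: eq_bigr => x _; rewrite ffunMnE. Qed.

Lemma sum_on_delta h : sum_on (delta h) = (h \in K)%:R.
Proof.
rewrite /sum_on; have [Kh|nKh] := boolP (h \in K).
  rewrite (bigD1 h) //= ffunE eqxx big1 ?addr0 // => x /andP[_ /negbTE xh].
  by rewrite ffunE xh.
by rewrite big1 // => x Kx; rewrite ffunE; case: eqP Kx => // ->; rewrite (negbTE nKh).
Qed.

Lemma sum_on_mul_delta h g : h \in K -> sum_on (delta h * g) = sum_on g.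
Proof.
move=> Kh; rewrite /sum_on; under eq_bigr do rewrite mul_deltaE.
rewrite (reindex_inj (addIr h)) /=.
apply: eq_big => [x|x _]; last by rewrite addrK.
apply/idP/idP => Kx; first by rewrite -(addrK h x) KB.
by rewrite -(opprK h) KB // -sub0r KB.
Qed.

Definition sum_on_null (f : gring) : Prop := forall g, sum_on (f * g) = 0.

Lemma sum_on_null0 : sum_on_null 0.
Proof. by move=> g; rewrite mul0r sum_on0. Qed.

Lemma sum_on_nullD f g : sum_on_null f -> sum_on_null g -> sum_on_null (f + g).
Proof. by move=> nf ng u; rewrite mulrDl sum_onD nf ng addr0. Qed.

Lemma sum_on_nullM r f : sum_on_null f -> sum_on_null (r * f).
Proof. by move=> nf g; rewrite -mulrA mulrCA nf. Qed.

Lemma sum_on_null_delta_sub1 h : h \in K -> sum_on_null (delta h - 1).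
Proof. by move=> Kh g; rewrite mulrBl mul1r sum_onB sum_on_mul_delta ?subrr. Qed.

Lemma sum_on_prod_weighted t (B : finType) (c w : B -> nat) (h : 'I_t -> H) :
  sum_on (\prod_j \sum_b (c b)%:R * delta (h j) ^+ w b) =
  \sum_(s : {ffun 'I_t -> B}) ((\sum_j h j *+ w (s j)) \in K)%:R *+ \prod_j c (s j).
Proof.
rewrite bigA_distr_bigA /= (big_morph sum_on sum_onD sum_on0).
apply: eq_bigr => s _; rewrite big_split /= -natr_prod mulr_natl sum_onMn.
congr (_ *+ _); under eq_bigr do rewrite deltaX.
by rewrite -(big_morph delta deltaD delta0) sum_on_delta.
Qed.

End GroupRing.
Lemma mul_bin_succ (a m : nat) :
  (a * 'C(a, m) = m * 'C(a, m) + m.+1 * 'C(a, m.+1))%N.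
Proof.
rewrite mul_bin_left; have [ma|am] := leqP m a; first by rewrite -mulnDl addnC subnK.
by rewrite bin_small // !muln0.
Qed.

Lemma binomial_weights_eq0 (F : fieldType) (T : seq nat) (c : nat -> F) :
  uniq T -> {in T &, injective (fun a : nat => a%:R : F)} ->
  (forall m, (m < size T)%N -> \sum_(a <- T) c a * 'C(a, m)%:R = 0) ->
  {in T, forall a, c a = 0}.
Proof.
elim: T c => // a0 T IHT c /= /andP[a0T uT] injT sum0.
have injT' : {in T &, injective (fun a : nat => a%:R : F)}.
  by move=> a b aT bT; apply: injT; rewrite inE ?aT ?bT orbT.
(* [(a - a0) 'C(a, m) = m 'C(a, m) + m.+1 'C(a, m.+1) - a0 'C(a, m)], so the
   weights [c a * (a - a0)] satisfy the first [size T] equations on [T]. *)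
have cT : {in T, forall a, c a * (a%:R - a0%:R) = 0}.
  apply: IHT uT injT' _ => m ltm.
  have -> : \sum_(a <- T) c a * (a%:R - a0%:R) * 'C(a, m)%:R =
      \sum_(a <- a0 :: T) c a * (a%:R - a0%:R) * 'C(a, m)%:R.
    by rewrite big_cons subrr mulr0 mul0r add0r.
  have -> : \sum_(a <- a0 :: T) c a * (a%:R - a0%:R) * 'C(a, m)%:R =
      \sum_(a <- a0 :: T) (m%:R * (c a * 'C(a, m)%:R)
        + m.+1%:R * (c a * 'C(a, m.+1)%:R) - a0%:R * (c a * 'C(a, m)%:R)).
    apply: eq_bigr => a _.
    rewrite mulrBr mulrBl -mulrA -natrM mul_bin_succ natrD !natrM.
    congr (_ - _); last by rewrite mulrCA mulrA.
    by rewrite mulrDr !mulrA ![c a * _]mulrC.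
  rewrite sumrB big_split /= -!mulr_sumr !sum0 /=; try lia.
  by rewrite !mulr0 subr0 addr0.
have {}cT : {in T, forall a, c a = 0}.
  move=> a aT; apply/eqP; have /eqP := cT a aT.
  rewrite mulf_eq0 subr_eq0 => /orP[//|/eqP /injT eq_a].
  by move: a0T; rewrite -eq_a ?aT ?inE ?aT ?eqxx ?orbT.
have := sum0 0%N isT; rewrite big_cons bin0 mulr1 big_seq big1 ?addr0 => [c0|a aT].
  by move=> a; rewrite inE => /predU1P[->|/cT].
by rewrite cT ?mul0r.
Qed.

Lemma exists_binomial_dual (F : fieldType) (A : seq nat) :
  uniq A -> {in A &, injective (fun a : nat => a%:R : F)} ->
  exists d : 'I_(size A) -> F, forall m, (m < size A)%N ->
    \sum_i d i * 'C(nth 0%N A i, m)%:R = (m == 0%N)%:R.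
Proof.
move=> uA injA; set k := size A.
pose M : 'M[F]_k := \matrix_(i, j) 'C(nth 0%N A i, j)%:R.
have M_unit : M \in unitmx.
  rewrite -row_free_unit; apply: inj_row_free => v vM0; apply/rowP => i.
  pose c x := \sum_(j < k | nth 0%N A j == x) v 0 j.
  have cE (j : 'I_k) : c (nth 0%N A j) = v 0 j.
    by rewrite /c (big_pred1 j) // => j'; rewrite nth_uniq.
  rewrite mxE -cE; apply: (binomial_weights_eq0 uA injA); last exact: mem_nth.
  move=> m ltm; rewrite (big_nth 0%N) big_mkord.
  have := congr1 (fun u : 'rV[F]_k => u 0 (Ordinal ltm)) vM0; rewrite !mxE => vM0m.
  by rewrite -[RHS]vM0m; apply: eq_bigr => j _; rewrite cE mxE.
pose u : 'rV[F]_k := \row_j ((j : nat) == 0%N)%:R.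
exists (fun i => (u *m invmx M) 0 i) => m ltm.
have := congr1 (fun v : 'rV[F]_k => v 0 (Ordinal ltm)) (mulmxKV M_unit u).
rewrite !mxE => uM; rewrite -[RHS]uM; apply: eq_bigr => i _.
by rewrite [M _ _]mxE.
Qed.

(* Expand [y = (y - 1) + 1]: the coefficient of [(y - 1) ^+ m] is
   [\sum_b c b * 'C(w b, m)], which vanishes in [R] for [m < k]. *)
Lemma exists_subr1X_factor (R : comNzRingType) (p : nat) (B : finType)
    (c w : B -> nat) (k : nat) (y : R) :
  p \in [pchar R] ->
  (forall m, (m < k)%N -> (p %| \sum_b c b * 'C(w b, m))%N) ->
  exists s, \sum_b (c b)%:R * y ^+ w b = (y - 1) ^+ k * s.
Proof.
move=> pR dvd_coef; set z := y - 1; set N := (\sum_b w b)%N.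
have yX b : y ^+ w b = \sum_(m < N.+1) ('C(w b, m))%:R * z ^+ m.
  have -> : y = z + 1 by rewrite subrK.
  have wN : (w b < N.+1)%N by rewrite ltnS /N (bigD1 b) //= leq_addr.
  rewrite exprD1n (big_ord_widen N.+1 (fun m => z ^+ m *+ 'C(w b, m))) //.
  rewrite big_mkcond /=; apply: eq_bigr => m _; case: ifP => [_|wm].
    by rewrite mulr_natl.
  by rewrite bin_small ?mul0r // ltnNge -ltnS wm.
exists (\sum_(m < N.+1) (\sum_b c b * 'C(w b, m))%N%:R *
  (if (k <= m)%N then z ^+ (m - k) else 0)).
rewrite mulr_sumr; under eq_bigr do rewrite yX mulr_sumr.
rewrite exchange_big /=; apply: eq_bigr => m _.
have -> : \sum_b (c b)%:R * (('C(w b, m))%:R * z ^+ m) =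
    (\sum_b c b * 'C(w b, m))%N%:R * z ^+ m.
  by rewrite natr_sum mulr_suml; apply: eq_bigr => b _; rewrite natrM mulrA.
case: leqP => km; first by rewrite mulrCA -exprD subnKC.
by have := dvd_coef m km; rewrite (dvdn_pcharf pR) => /eqP ->; rewrite !mul0r mulr0.
Qed.

Definition Zp_tuple (Q l : nat) := {ffun 'I_l -> 'Z_Q}.
HB.instance Definition _ Q l := Finite.on (Zp_tuple Q l).
HB.instance Definition _ Q l := GRing.Zmodule.on (Zp_tuple Q l).

Section WeightedZeroSums.
Variables (p l : nat) (e : nat -> nat).
Hypothesis p_pr : prime p.
Hypothesis l_gt0 : (0 < l)%N.
Hypothesis e_gt0 : forall i, (i < l)%N -> (1 <= e i)%N.
Hypothesis e_mono : forall i j, (i <= j < l)%N -> (e i <= e j)%N.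

(* A single finZmodType is needed for the group algebra, so [G] is realised as
   [H / kerG] with [H = (Z/QZ)^l]; [e] is nondecreasing, so [Q] is the
   largest modulus. *)
Let Q := (p ^ e l.-1)%N.
Let H := Zp_tuple Q l.

Lemma Q_gt1 : (1 < Q)%N.
Proof.
have e_last : (1 <= e l.-1)%N by apply: e_gt0; lia.
by rewrite /Q -[1%N](expn0 p) ltn_exp2l ?prime_gt1.
Qed.

Lemma dvdn_pe_Q (i : 'I_l) : (p ^ e i %| Q)%N.
Proof. by apply: dvdn_exp2l; apply: e_mono; have := ltn_ord i; lia. Qed.

Lemma dvdn_pe_Zp_natr (i : 'I_l) n :
  (p ^ e i %| ((n%:R : 'Z_Q) : nat))%N = (p ^ e i %| n)%N.
Proof. by rewrite val_Zp_nat ?Q_gt1 // /dvdn (modn_dvdm _ (dvdn_pe_Q i)). Qed.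

Definition kerG : {pred H} := [pred x : H | [forall i : 'I_l, p ^ e i %| x i]%N].

Lemma kerG0 : 0 \in kerG.
Proof. by rewrite inE; apply/forallP => i; rewrite ffunE. Qed.

Lemma kerGB a b : a \in kerG -> b \in kerG -> a - b \in kerG.
Proof.
rewrite !inE => /forallP dvd_a /forallP dvd_b; apply/forallP => i; rewrite !ffunE.
have -> : a i - b i = (a i + (Q - b i))%N%:R.
  have Q0 : (Q%:R : 'Z_Q) = 0 by apply: val_inj; rewrite /= val_Zp_nat ?Q_gt1 ?modnn.
  have ltbQ : (b i < Q)%N by rewrite -[X in (_ < X)%N]Zp_cast ?Q_gt1.
  by rewrite natrD natrB ?Q0 ?(ltnW ltbQ) // !natr_Zp sub0r.
by rewrite dvdn_pe_Zp_natr dvdn_add ?dvdn_sub ?dvdn_pe_Q.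
Qed.

Definition embed (x : Gelt p l e) : H := [ffun i => (x i : nat)%:R].

Lemma embed_sum_kerG t (g : 'I_t -> Gelt p l e) (w : 'I_t -> nat) :
  (\sum_j embed (g j) *+ w j \in kerG) =
  [forall i : 'I_l, p ^ e i %| \sum_j w j * g j i]%N.
Proof.
rewrite inE; apply: eq_forallb => i.
have -> : (\sum_j embed (g j) *+ w j) i = (\sum_j w j * g j i)%N%:R.
  rewrite sum_ffunE natr_sum; apply: eq_bigr => j _.
  by rewrite ffunMnE ffunE natrM mulr_natl.
exact: dvdn_pe_Zp_natr.
Qed.

Let R := gring H 'F_p.
Let unit_vec (i : 'I_l) : H := [ffun i' => (i' == i)%:R].
Let z (i : 'I_l) : R := delta 'F_p (unit_vec i) - 1.

Lemma sum_on_null_zX i : sum_on_null kerG (z i ^+ (p ^ e i)).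
Proof.
rewrite /z delta_sub1X_pchar ?pchar_Fp //.
apply: (sum_on_null_delta_sub1 kerG0 kerGB).
rewrite inE; apply/forallP => i'; rewrite ffunMnE ffunE -mulrnA dvdn_pe_Zp_natr.
by case: eqP => [->|_]; rewrite ?mul1n ?mul0n.
Qed.

Lemma gen_ideal_delta_sub1 (h : H) : gen_ideal z (delta 'F_p h - 1).
Proof.
have -> : h = \sum_i unit_vec i *+ h i.
  apply/ffunP => i; rewrite sum_ffunE (bigD1 i) //= ffunMnE ffunE eqxx big1.
    by rewrite addr0 natr_Zp.
  by move=> j /negbTE ji; rewrite ffunMnE ffunE eq_sym ji mul0rn.
exact: delta_sum_gen_ideal.
Qed.

Lemma sum_on_null_prod (t k : nat) (h : 'I_t -> H) :
  (1 + \sum_(i < l) (p ^ e i - 1) <= t * k)%N ->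
  sum_on_null kerG (\prod_j (delta 'F_p (h j) - 1) ^+ k).
Proof.
move=> long; have -> : \prod_j (delta 'F_p (h j) - 1) ^+ k =
    \prod_(x : 'I_t * 'I_k) (delta 'F_p (h x.1) - 1).
  rewrite -(pair_bigA _ (fun j (_ : 'I_k) => delta 'F_p (h j) - 1)).
  by apply: eq_bigr => j _; rewrite prodr_const card_ord.
apply: (prod_gen_ideal (sum_on_null0 _) (@sum_on_nullD _ _ _) (@sum_on_nullM _ _ _)
  sum_on_null_zX) => [x|]; first exact: gen_ideal_delta_sub1.
by rewrite card_prod !card_ord.
Qed.

Variable A : seq nat.
Hypothesis A_uniq : uniq A.
Hypothesis A_modp_inj : forall a b, a \in A -> b \in A -> a = b %[mod p] -> a = b.

Let k := size A.

(* Index [ord0] stands for the constant term, [lift ord0 i] for [nth 0 A i]. *)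
Definition wexp (b : 'I_k.+1) : nat :=
  if unlift ord0 b is Some i then nth 0%N A i else 0%N.

Lemma natr_Fp_inj : {in A &, injective (fun a : nat => a%:R : 'F_p)}.
Proof.
move=> a b aA bA /(congr1 val); rewrite /= !val_Fp_nat // => ab_mod.
exact: A_modp_inj.
Qed.

Lemma exists_binomial_weights :
  exists c : 'I_k.+1 -> nat, c ord0 = p.-1 /\
    forall m, (m < k)%N -> (p %| \sum_b c b * 'C(wexp b, m))%N.
Proof.
have [d dE] := exists_binomial_dual A_uniq natr_Fp_inj.
exists (fun b => if unlift ord0 b is Some i then d i : nat else p.-1).
split => [|m ltm]; first by rewrite unlift_none.
have pm1 : ((p.-1)%:R : 'F_p) = -1.
  by rewrite -subn1 natrB ?prime_gt0 // (pcharf0 (pchar_Fp p_pr)) sub0r.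
rewrite (dvdn_pcharf (pchar_Fp p_pr)) natr_sum big_ord_recl /wexp unlift_none /=.
under eq_bigr do rewrite liftK natrM natr_Zp.
rewrite dE // natrM pm1 bin0n mulN1r addrC subr_eq0.
by case: (m == 0%N).
Qed.

Lemma weighted_zero_subsum_of_ffun t (g : 'I_t -> Gelt p l e)
    (s : {ffun 'I_t -> 'I_k.+1}) :
  s != [ffun=> ord0] -> \sum_j embed (g j) *+ wexp (s j) \in kerG ->
  A_weighted_zero_subsum A g.
Proof.
move=> s_neq0; rewrite embed_sum_kerG => /forallP dvd_sum.
have wexp0 : wexp ord0 = 0%N by rewrite /wexp unlift_none.
exists [set j | s j != ord0], (fun j => wexp (s j)); split; [|split].
- apply: contra_neq s_neq0 => S0; apply/ffunP => j; rewrite ffunE.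
  by apply/eqP; move/setP: S0 => /(_ j); rewrite !inE => /negbFE.
- move=> j; rewrite inE /wexp; case: unliftP => [i _ _|->]; last by rewrite eqxx.
  exact: mem_nth.
- move=> i; apply/eqP; rewrite big_mkcond /=.
  rewrite (eq_bigr (fun j => wexp (s j) * g j i)%N) => [|j _]; first exact: dvd_sum.
  by rewrite inE; case: eqP => [->|]; rewrite ?wexp0.
Qed.

Lemma sum_on_weighted_prod t (g : 'I_t -> Gelt p l e) (c : 'I_k.+1 -> nat) :
  c ord0 = p.-1 -> ~ A_weighted_zero_subsum A g ->
  sum_on kerG (\prod_j \sum_b (c b)%:R * delta 'F_p (embed (g j)) ^+ wexp b) =
  (p.-1 ^ t)%N%:R.
Proof.
move=> c0 no_subsum; rewrite sum_on_prod_weighted (bigD1 [ffun=> ord0]) //=.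
rewrite [X in _ + X]big1 => [|s s_neq0]; last first.
  have [/(weighted_zero_subsum_of_ffun s_neq0)//|_] := boolP (_ \in kerG).
  by rewrite mul0rn.
rewrite addr0 big1 => [|j _]; last by rewrite ffunE /wexp unlift_none mulr0n.
rewrite kerG0; under eq_bigr do rewrite ffunE c0.
by rewrite prod_nat_const card_ord.
Qed.

Lemma sum_on_weighted_prod_eq0 t (g : 'I_t -> Gelt p l e) (c : 'I_k.+1 -> nat) :
  (forall m, (m < k)%N -> (p %| \sum_b c b * 'C(wexp b, m))%N) ->
  (1 + \sum_(i < l) (p ^ e i - 1) <= t * k)%N ->
  sum_on kerG (\prod_j \sum_b (c b)%:R * delta 'F_p (embed (g j)) ^+ wexp b) = 0.
Proof.
move=> c_dvd long.
have factor j : exists s : R,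
    \sum_b (c b)%:R * delta 'F_p (embed (g j)) ^+ wexp b =
    (delta 'F_p (embed (g j)) - 1) ^+ k * s.
  exact: exists_subr1X_factor (gring_pchar _ (pchar_Fp p_pr)) c_dvd.
have [s sE] := fin_all_exists factor.
under eq_bigr do rewrite sE.
by rewrite big_split /=; apply: sum_on_null_prod.
Qed.

Lemma A_weighted_zero_subsum_of_length t (g : 'I_t -> Gelt p l e) :
  (1 + \sum_(i < l) (p ^ e i - 1) <= t * k)%N -> A_weighted_zero_subsum A g.
Proof.
move=> long; apply: NNPP => no_subsum.
have [c [c0 c_dvd]] := exists_binomial_weights.
have := sum_on_weighted_prod_eq0 g c_dvd long.
rewrite (sum_on_weighted_prod c0 no_subsum) => /eqP.
rewrite -(dvdn_pcharf (pchar_Fp p_pr)) Euclid_dvdX // => /andP[/dvdn_leq].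
by have := prime_gt1 p_pr; lia.
Qed.

End WeightedZeroSums.

Local Close Scope ring_scope.

Theorem theorem1 (p l : nat) (e : nat -> nat) (A : seq nat) :
  prime p -> 0 < l ->
  (forall i, i < l -> 1 <= e i) ->
  (forall i j, i <= j < l -> e i <= e j) ->
  A != [::] -> uniq A ->
  (forall a, a \in A -> 1 <= a <= p ^ e l.-1) ->
  (forall a, a \in A -> ~~ (p %| a)) ->
  (forall a b, a \in A -> b \in A -> a = b %[mod p] -> a = b) ->
  exists d, is_dA p l e A d /\
    d <= ceil_div (1 + \sum_(i < l) (p ^ e i - 1)) (size A).
Proof.
move=> p_pr l_gt0 e_gt0 e_mono A_neq0 A_uniq _ _ A_modp_inj.
set D := 1 + _; set k := size A; set N := ceil_div D k.
have k_gt0 : 0 < k by rewrite lt0n size_eq0.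
have long t : D <= t * k -> dA_property p l e A t.
  by move=> Dtk g; apply: A_weighted_zero_subsum_of_length.
have DN : D <= N * k.
  rewrite /N /ceil_div; have := divn_eq (D + k.-1) k.
  by have := ltn_pmod (D + k.-1) k_gt0; lia.
have N_gt0 : 0 < N by move: DN; rewrite /D; case: (N); lia.
pose P t := 0 < t /\ dA_property p l e A t.
have [d [[[d_gt0 dA] d_min] _]] :=
  dec_inh_nat_subset_has_unique_least_element P (fun t => classic (P t))
    (ex_intro P N (conj N_gt0 (long N DN))).
exists d; split; last by apply/leP/d_min; split => //; apply: long.
by split; [|split] => // t t_gt0 /(conj t_gt0) /d_min /leP.
Qed.
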